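(* Let $\bar L>0$, $\mu\ge0$ with $\bar L\ge\mu$, $p\in(0,1]$, $\alpha,\tau,\beta\in(0,1]$ and $\Gamma_0\ge1$. Set $\theta_{\min}=\frac14\min\{1,\frac\alpha p,\frac\tau p,\frac\beta p\}$ and for $t\ge0$ let $\bar\theta_{t+1}$ be the largest root of $p\bar L\Gamma_t\theta^2+p(\bar L+\Gamma_t\mu)\theta-(\bar L+\Gamma_t\mu)=0$, $\theta_{t+1}=\min\{\bar\theta_{t+1},\theta_{\min}\}$, $\gamma_{t+1}=\frac{p\theta_{t+1}\Gamma_t}{1-p\theta_{t+1}}$, $\Gamma_{t+1}=\Gamma_t+\gamma_{t+1}$. Then: 1. $\theta_{t+1},\gamma_{t+1},\Gamma_{t+1}$ are well defined and $\theta_{t+1},\gamma_{t+1}\ge0$ for all $t\ge0$; 2. $\gamma_{t+1}=p\theta_{t+1}\Gamma_{t+1}$ for all $t\ge0$; 3. $\bar L\theta_{t+1}\gamma_{t+1}\le\bar L+\Gamma_t\mu$ for all $t\ge0$; 4. $\Gamma_t\ge\frac{\Gamma_0}{2}\exp\big(t\min\{\sqrt{\frac{p\mu}{4\bar L}},p\theta_{\min}\}\big)$ for all $t\ge0$; 5. with $\bar t=\max\{\lceil\frac{1}{p\theta_{\min}}\log\frac{1}{2\Gamma_0p\theta_{\min}^2}\rceil,0\}$, $\Gamma_t\ge\frac{\Gamma_0}{2}\exp(tp\theta_{\min})$ for $t<\bar t$ and $\Gamma_t\ge\frac{1}{4p\theta_{\min}^2}+\frac{p(t-\bar t)^2}{16}$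 for $t\ge\bar t$; 6. $(\theta_{t+1})_{t\ge0}$ is non-increasing.
   Context: These are the learning-rate sequences used by the distributed optimization method 2Direction (there $\alpha$ is the contraction parameter of the server compressor, $\tau$ a momentum, $p$ a probability, and $\beta=1/(\omega+1)$ with $\omega\ge0$). *)

From Stdlib Require Import Reals ZArith.
Open Scope R_scope.

(* ceiling of a real number: Int_part is the floor (Int_part x = up x - 1). *)
Definition Rceil (x : R) : Z := (- Int_part (- x))%Z.

Definition theta_min (p alpha tau beta : R) : R :=
  / 4 * Rmin 1 (Rmin (alpha / p) (Rmin (tau / p) (beta / p))).

Definition quadr (L mu p G th : R) : R :=
  p * L * G * th ^ 2 + p * (L + G * mu) * th - (L + G * mu).

Definition theta_bar (L mu p G : R) : R :=
  (- (p * (L + G * mu))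
   + sqrt ((p * (L + G * mu)) ^ 2 + 4 * (p * L * G) * (L + G * mu)))
  / (2 * (p * L * G)).

Definition theta_next (L mu p alpha tau beta G : R) : R :=
  Rmin (theta_bar L mu p G) (theta_min p alpha tau beta).

Definition gamma_next (L mu p alpha tau beta G : R) : R :=
  p * theta_next L mu p alpha tau beta G * G
  / (1 - p * theta_next L mu p alpha tau beta G).

Fixpoint Gam (L mu p alpha tau beta G0 : R) (t : nat) : R :=
  match t with
  | O => G0
  | S t' => Gam L mu p alpha tau beta G0 t'
            + gamma_next L mu p alpha tau beta (Gam L mu p alpha tau beta G0 t')
  end.

(* theta_{t+1} and gamma_{t+1} *)
Definition theta_s (L mu p alpha tau beta G0 : R) (t : nat) : R :=
  theta_next L mu p alpha tau beta (Gam L mu p alpha tau beta G0 t).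
Definition gamma_s (L mu p alpha tau beta G0 : R) (t : nat) : R :=
  gamma_next L mu p alpha tau beta (Gam L mu p alpha tau beta G0 t).

Definition t_bar (p alpha tau beta G0 : R) : Z :=
  let tm := theta_min p alpha tau beta in
  Z.max (Rceil (/ (p * tm) * ln (/ (2 * G0 * p * tm ^ 2)))) 0.

From Stdlib Require Import Reals ZArith Lra Psatz.
Open Scope R_scope.

(* Write [x = p theta_{t+1}].  Then [Gamma_{t+1} = Gamma_t / (1 - x)] with [x <= 1/4], and
   [theta_{t+1} <= theta_bar] says exactly that the quadratic is nonpositive at [theta_{t+1}];
   this gives items 1-3.  Since [1 / (1 - x) >= exp x], [Gamma] grows geometrically at rate [x],
   and when [theta_bar] is the active constraint the quadratic equation gives
   [L x^2 >= p mu (1 - x)], hence item 4.  While [p Gamma_t theta_min^2 <= 3/4] the quadratic is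
   nonpositive at [theta_min], so [x = p theta_min]; this phase lasts until [t_bar].  From then on
   [Gamma_t >= 1 / (4 p theta_min^2) + p s^2 / 16] forces an increment of at least
   [p (2 s + 1) / 16], which telescopes to the quadratic bound of item 5.  Item 6 holds because
   [theta_bar] decreases as [Gamma] grows. *)

Lemma exp_le_compat x y : x <= y -> exp x <= exp y.
Proof.
  intros [hxy|<-]; [left; apply exp_increasing|]; lra.
Qed.

Lemma exp_mul_one_sub_le x : exp x * (1 - x) <= 1.
Proof.
  pose proof (exp_ineq1_le (- x)) as h. rewrite exp_Ropp in h.
  pose proof (exp_pos x).
  replace 1 with (exp x * / exp x) at 2 by (field; lra).
  apply Rmult_le_compat_l; lra.
Qed.

Lemma exp_growth (u : nat -> R) r : (forall t, u t * exp r <= u (S t)) ->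
  forall t, u O * exp (INR t * r) <= u t.
Proof.
  intros hstep t. induction t as [|t IH].
  - rewrite Rmult_0_l, exp_0. lra.
  - rewrite S_INR, Rmult_plus_distr_r, Rmult_1_l, exp_plus, <- Rmult_assoc.
    apply Rle_trans with (u t * exp r); [|apply hstep].
    apply Rmult_le_compat_r; [left; apply exp_pos | exact IH].
Qed.

Lemma capped_exp_growth (u : nat -> R) r c :
  (forall t, u t <= u (S t)) -> (forall t, u t <= c -> u t * exp r <= u (S t)) ->
  forall t, Rmin (u O * exp (INR t * r)) c <= u t.
Proof.
  intros hmono hstep t. induction t as [|t IH].
  - rewrite Rmult_0_l, exp_0, Rmult_1_r. apply Rmin_l.
  - pose proof (hmono t).
    destruct (Rle_or_lt (u t) c) as [hc|hc];
      [|apply Rle_trans with c; [apply Rmin_r | lra]].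
    destruct (Rle_or_lt (u O * exp (INR t * r)) c) as [hE|hE].
    + rewrite Rmin_left in IH by exact hE.
      apply Rle_trans with (u O * exp (INR (S t) * r)); [apply Rmin_l|].
      rewrite S_INR, Rmult_plus_distr_r, Rmult_1_l, exp_plus, <- Rmult_assoc.
      apply Rle_trans with (u t * exp r); [|apply hstep, hc].
      apply Rmult_le_compat_r; [left; apply exp_pos | exact IH].
    + rewrite Rmin_right in IH by lra.
      apply Rle_trans with c; [apply Rmin_r | lra].
Qed.

Lemma quadratic_growth (u : nat -> R) a c n : a <= u n ->
  (forall t s, 0 <= s -> a + c * s ^ 2 <= u t -> a + c * (s + 1) ^ 2 <= u (S t)) ->
  forall k, a + c * INR k ^ 2 <= u (n + k)%nat.
Proof.
  intros hn hstep k. induction k as [|k IH].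
  - rewrite Nat.add_0_r. simpl. lra.
  - rewrite Nat.add_succ_r, S_INR. apply hstep; [apply pos_INR | exact IH].
Qed.

Lemma Rceil_spec x : x <= IZR (Rceil x) < x + 1.
Proof.
  unfold Rceil. destruct (base_Int_part (- x)). rewrite opp_IZR. lra.
Qed.

Lemma lt_of_lt_max_ceil x (t : nat) : (Z.of_nat t < Z.max (Rceil x) 0)%Z -> INR t < x.
Proof.
  intros ht. destruct (Rceil_spec x).
  assert (h : (Z.of_nat t + 1 <= Rceil x)%Z) by lia.
  apply IZR_le in h. rewrite plus_IZR, <- INR_IZR_INZ in h. lra.
Qed.

Lemma le_max_ceil x : x <= IZR (Z.max (Rceil x) 0).
Proof.
  destruct (Rceil_spec x). destruct (Z.max_spec (Rceil x) 0) as [[h ->]|[_ ->]].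
  - apply IZR_lt in h. lra.
  - lra.
Qed.

Lemma exp_lt_iff k y s : 0 < k -> 0 < y -> exp (s * k) < y <-> s < / k * ln y.
Proof.
  intros hk hy. rewrite <- (exp_ln y hy) at 1.
  split; intros h.
  - apply exp_lt_inv in h.
    apply (Rmult_lt_reg_l k); [lra|].
    replace (k * (/ k * ln y)) with (ln y) by (field; lra). lra.
  - apply exp_increasing.
    apply (Rmult_lt_compat_l k) in h; [|lra].
    replace (k * (/ k * ln y)) with (ln y) in h by (field; lra). lra.
Qed.

Section Quadratic.

Variables L mu p G : R.
Hypotheses (hL : 0 < L) (hmu : 0 <= mu) (hp : 0 < p) (hG : 0 < G).

Local Notation q := (quadr L mu p G).
Local Notation tbar := (theta_bar L mu p G).

Let a_pos : 0 < p * L * G.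
Proof. apply Rmult_lt_0_compat; [apply Rmult_lt_0_compat|]; assumption. Qed.

Let A_pos : 0 < L + G * mu.
Proof. nra. Qed.

Lemma quadr_theta_bar : q tbar = 0 /\ 0 < tbar.
Proof.
  set (a := p * L * G) in *; set (A := L + G * mu) in *.
  set (S := sqrt ((p * A) ^ 2 + 4 * a * A)).
  assert (hS : S * S = (p * A) ^ 2 + 4 * a * A) by (apply sqrt_sqrt; nra).
  assert (hS0 : 0 <= S) by apply sqrt_pos.
  assert (htbar : 2 * a * tbar = S - p * A).
  { unfold theta_bar; fold a A S. field. lra. }
  split.
  - apply (Rmult_eq_reg_l (4 * a)); [|lra].
    replace (4 * a * q tbar) with
      ((2 * a * tbar) ^ 2 + 2 * (p * A) * (2 * a * tbar) - 4 * a * A)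
      by (unfold quadr; fold a A; ring).
    rewrite htbar. nra.
  - apply (Rmult_lt_reg_l (2 * a)); [lra|]. nra.
Qed.

Lemma quadr_factor x :
  q x = (x - tbar) * (p * L * G * (x + tbar) + p * (L + G * mu)).
Proof.
  destruct quadr_theta_bar as [hq _].
  replace (q x) with (q x - q tbar) by lra. unfold quadr. ring.
Qed.

Lemma quadr_nonpos x : 0 <= x -> x <= tbar -> q x <= 0.
Proof.
  intros hx hxt. rewrite quadr_factor.
  assert (0 < p * L * G * (x + tbar) + p * (L + G * mu)).
  { destruct quadr_theta_bar as [_ ht]. nra. }
  nra.
Qed.

Lemma le_theta_bar x : 0 <= x -> q x <= 0 -> x <= tbar.
Proof.
  intros hx. rewrite quadr_factor. destruct quadr_theta_bar as [_ ht].
  assert (0 < p * L * G * (x + tbar) + p * (L + G * mu)) by nra.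
  nra.
Qed.

Lemma root_le_theta_bar x : q x = 0 -> x <= tbar.
Proof.
  intros hx. destruct (Rle_or_lt 0 x) as [hx0|hx0].
  - apply le_theta_bar; lra.
  - destruct quadr_theta_bar; lra.
Qed.

End Quadratic.

(* Dividing the quadratic by [L + G mu] leaves [c th^2 + p th - 1] with [c] increasing in [G]. *)
Lemma theta_bar_antitone L mu p G G' : 0 < L -> 0 <= mu -> 0 < p -> 0 < G -> G <= G' ->
  theta_bar L mu p G' <= theta_bar L mu p G.
Proof.
  intros hL hmu hp hG hGG'.
  assert (hG' : 0 < G') by lra.
  destruct (quadr_theta_bar L mu p G' hL hmu hp hG') as [hq' ht'].
  set (x := theta_bar L mu p G') in *.
  apply le_theta_bar; try lra.
  assert (Id : quadr L mu p G x * (L + G' * mu) =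
     quadr L mu p G' x * (L + G * mu) - p * L ^ 2 * x ^ 2 * (G' - G))
    by (unfold quadr; ring).
  rewrite hq', Rmult_0_l in Id.
  assert (0 <= p * L ^ 2 * x ^ 2 * (G' - G)).
  { apply Rmult_le_pos; [apply Rmult_le_pos; [apply Rmult_le_pos|]|]; try apply pow2_ge_0; lra. }
  assert (0 < L + G' * mu) by nra.
  nra.
Qed.

Lemma theta_min_pos p alpha tau beta : 0 < p -> 0 < alpha -> 0 < tau -> 0 < beta ->
  0 < theta_min p alpha tau beta.
Proof.
  intros hp ha ht hb. unfold theta_min.
  apply Rmult_lt_0_compat; [lra|].
  repeat apply Rmin_glb_lt; try lra; apply Rdiv_lt_0_compat; lra.
Qed.

Lemma theta_min_le_quarter p alpha tau beta : theta_min p alpha tau beta <= / 4.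
Proof.
  unfold theta_min. pose proof (Rmin_l 1 (Rmin (alpha / p) (Rmin (tau / p) (beta / p)))).
  lra.
Qed.



Lemma quadratic_increment_at_theta_min p w G s : 0 < p <= 1 -> 0 < w <= / 4 -> 0 <= s ->
  / (4 * p * w ^ 2) + p * s ^ 2 / 16 <= G -> p * (2 * s + 1) / 16 <= p * w * G.
Proof.
  intros hp hw hs hG.
  apply Rle_trans with (/ (4 * w) + p * w * (p * s ^ 2 / 16)).
  - (* with [z = p w <= 1/4], multiplying by [16 w] gives [(z s - 1)^2 + 3 - z >= 0] *)
    apply (Rmult_le_reg_l (16 * w)); [lra|].
    replace (16 * w * (/ (4 * w) + p * w * (p * s ^ 2 / 16))) with (4 + (p * w * s) ^ 2)
      by (field; lra).
    assert (p * w <= / 4) by nra.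
    pose proof (pow2_ge_0 (p * w * s - 1)). nra.
  - replace (/ (4 * w) + p * w * (p * s ^ 2 / 16))
      with (p * w * (/ (4 * p * w ^ 2) + p * s ^ 2 / 16)) by (field; lra).
    apply Rmult_le_compat_l; nra.
Qed.

Lemma quadratic_increment_at_root p w y G s : 0 < p <= 1 -> 0 < w <= / 4 -> 0 <= y ->
  0 <= s -> 3 / 4 <= p * G * y ^ 2 ->
  / (4 * p * w ^ 2) + p * s ^ 2 / 16 <= G -> p * (2 * s + 1) / 16 <= p * y * G.
Proof.
  intros hp hw hy hs hGy hG.
  assert (hpG : 4 + p ^ 2 * s ^ 2 / 16 <= p * G).
  { assert (4 <= p * / (4 * p * w ^ 2)).
    { replace (p * / (4 * p * w ^ 2)) with (/ (4 * w ^ 2)) by (field; lra).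
      rewrite <- (Rinv_inv 4). apply Rinv_le_contravar; nra. }
    nra. }
  apply Rsqr_incr_0_var; [|nra]. unfold Rsqr.
  replace (p * y * G * (p * y * G)) with (p * G * (p * G * y ^ 2)) by ring.
  apply Rle_trans with (p * G * (3 / 4)); [|apply Rmult_le_compat_l; nra].
  pose proof (pow2_ge_0 (4 * s - 1)). nra.
Qed.

Section Step.

Variables L mu p alpha tau beta : R.
Hypotheses (hL : 0 < L) (hmu : 0 <= mu) (hp : 0 < p) (hp1 : p <= 1)
  (ha : 0 < alpha) (ht : 0 < tau) (hb : 0 < beta).

Local Notation tm := (theta_min p alpha tau beta).
Local Notation th := (theta_next L mu p alpha tau beta).
Local Notation ga := (gamma_next L mu p alpha tau beta).

Let tm_pos : 0 < tm.
Proof. exact (theta_min_pos p alpha tau beta hp ha ht hb). Qed.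

Let tm_le : tm <= / 4.
Proof. apply theta_min_le_quarter. Qed.

Lemma theta_next_cases G : th G = tm \/ th G = theta_bar L mu p G.
Proof. unfold theta_next. apply Rmin_case; auto. Qed.

Lemma theta_next_le_theta_min G : th G <= tm.
Proof. apply Rmin_r. Qed.

Lemma theta_next_le_theta_bar G : th G <= theta_bar L mu p G.
Proof. apply Rmin_l. Qed.

Lemma theta_next_pos G : 0 < G -> 0 < th G.
Proof.
  intros hG. destruct (quadr_theta_bar L mu p G hL hmu hp hG) as [_ htbar].
  destruct (theta_next_cases G) as [-> | ->]; assumption.
Qed.

Lemma p_theta_next_le_quarter G : p * th G <= / 4.
Proof. pose proof (theta_next_le_theta_min G). nra. Qed.

Lemma quadr_theta_next_nonpos G : 0 < G -> quadr L mu p G (th G) <= 0.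
Proof.
  intros hG. apply quadr_nonpos; auto.
  - left; apply theta_next_pos, hG.
  - apply theta_next_le_theta_bar.
Qed.

Lemma add_gamma_next G : G + ga G = G / (1 - p * th G).
Proof.
  pose proof (p_theta_next_le_quarter G).
  unfold gamma_next. field. lra.
Qed.

Lemma gamma_next_eq G : ga G = p * th G * (G + ga G).
Proof.
  pose proof (p_theta_next_le_quarter G).
  rewrite add_gamma_next. unfold gamma_next. field. lra.
Qed.

Lemma gamma_next_ge0 G : 0 < G -> 0 <= ga G.
Proof.
  intros hG. pose proof (p_theta_next_le_quarter G). pose proof (theta_next_pos G hG).
  unfold gamma_next. apply Rmult_le_pos.
  { left; repeat apply Rmult_lt_0_compat; assumption. }
  left; apply Rinv_0_lt_compat; lra.
Qed.

Lemma L_theta_gamma_next_le G : 0 < G -> L * th G * ga G <= L + G * mu.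
Proof.
  intros hG. pose proof (quadr_theta_next_nonpos G hG) as hq. unfold quadr in hq.
  pose proof (p_theta_next_le_quarter G).
  assert (p * L * G * th G ^ 2 <= (L + G * mu) * (1 - p * th G)) by lra.
  apply (Rmult_le_reg_r (1 - p * th G)); [lra|].
  replace (L * th G * ga G * (1 - p * th G)) with (p * L * G * th G ^ 2)
    by (unfold gamma_next; field; lra).
  assumption.
Qed.

Lemma exp_growth_step G y : 0 < G -> y <= p * th G -> G * exp y <= G + ga G.
Proof.
  intros hG hy. pose proof (p_theta_next_le_quarter G).
  rewrite add_gamma_next.
  apply Rle_trans with (G * exp (p * th G)).
  { apply Rmult_le_compat_l; [lra | apply exp_le_compat, hy]. }
  apply (Rmult_le_reg_r (1 - p * th G)); [lra|].
  replace (G / (1 - p * th G) * (1 - p * th G)) with G by (field; lra).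
  pose proof (exp_mul_one_sub_le (p * th G)). nra.
Qed.

Lemma rate_le_p_theta_next G : 0 < G -> Rmin (sqrt (p * mu / (4 * L))) (p * tm) <= p * th G.
Proof.
  intros hG. destruct (theta_next_cases G) as [E | E].
  - rewrite E. apply Rmin_r.
  - apply Rle_trans with (sqrt (p * mu / (4 * L))); [apply Rmin_l|].
    pose proof (theta_next_pos G hG). pose proof (p_theta_next_le_quarter G).
    rewrite <- (sqrt_pow2 (p * th G)) by nra. apply sqrt_le_1_alt.
    destruct (quadr_theta_bar L mu p G hL hmu hp hG) as [hq _].
    rewrite <- E in hq. unfold quadr in hq.
    assert (mu * (1 - p * th G) <= L * p * th G ^ 2).
    { apply (Rmult_le_reg_l G); [lra|]. nra. }
    apply (Rmult_le_reg_r (4 * L)); [lra|].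
    replace (p * mu / (4 * L) * (4 * L)) with (p * mu) by (field; lra).
    assert (mu * (3 / 4) <= L * p * th G ^ 2).
    { apply Rle_trans with (mu * (1 - p * th G)); [apply Rmult_le_compat_l|]; lra. }
    nra.
Qed.

Lemma theta_next_eq_theta_min G : 0 < G -> G <= 3 / (4 * p * tm ^ 2) -> th G = tm.
Proof.
  intros hG hG3. unfold theta_next. apply Rmin_right.
  apply le_theta_bar; auto; [lra|]. unfold quadr.
  assert (p * G * tm ^ 2 <= 3 / 4).
  { apply (Rmult_le_compat_l (p * tm ^ 2)) in hG3; [|nra].
    replace (p * tm ^ 2 * (3 / (4 * p * tm ^ 2))) with (3 / 4) in hG3 by (field; lra).
    lra. }
  assert (p * tm <= / 4) by nra.
  assert (L * (p * G * tm ^ 2) <= L * (3 / 4)) by (apply Rmult_le_compat_l; lra).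
  assert ((L + G * mu) * (3 / 4) <= (L + G * mu) * (1 - p * tm))
    by (apply Rmult_le_compat_l; nra).
  nra.
Qed.

Lemma quadratic_growth_step G s : 0 < G -> 0 <= s ->
  / (4 * p * tm ^ 2) + p * s ^ 2 / 16 <= G ->
  / (4 * p * tm ^ 2) + p * (s + 1) ^ 2 / 16 <= G + ga G.
Proof.
  intros hG hs hGs.
  assert (hinc : p * (2 * s + 1) / 16 <= p * th G * G).
  { destruct (theta_next_cases G) as [E | E]; rewrite E.
    - apply quadratic_increment_at_theta_min; lra.
    - apply quadratic_increment_at_root with tm; try lra.
      + pose proof (theta_next_pos G hG). lra.
      + destruct (quadr_theta_bar L mu p G hL hmu hp hG) as [hq _].
        pose proof (p_theta_next_le_quarter G). rewrite E in *.
        unfold quadr in hq.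
        assert (L * (3 / 4) <= (L + G * mu) * (1 - p * theta_bar L mu p G)).
        { apply Rle_trans with (L * (1 - p * theta_bar L mu p G));
            [apply Rmult_le_compat_l | apply Rmult_le_compat_r]; nra. }
        apply (Rmult_le_reg_l L); [lra|]. nra. }
  rewrite (gamma_next_eq G).
  pose proof (gamma_next_ge0 G hG). pose proof (theta_next_pos G hG).
  assert (p * th G * G <= p * th G * (G + ga G)) by (apply Rmult_le_compat_l; nra).
  lra.
Qed.

End Step.

Section Sequence.

Variables L mu p alpha tau beta G0 : R.
Hypotheses (hL : 0 < L) (hmu : 0 <= mu) (hp : 0 < p) (hp1 : p <= 1)
  (ha : 0 < alpha) (ht : 0 < tau) (hb : 0 < beta) (hG0 : 0 < G0).

Local Notation tm := (theta_min p alpha tau beta).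
Local Notation Gm := (Gam L mu p alpha tau beta G0).
Local Notation tb := (t_bar p alpha tau beta G0).

Let tm_pos : 0 < tm.
Proof. exact (theta_min_pos p alpha tau beta hp ha ht hb). Qed.

Let tm_sq_pos : 0 < tm ^ 2.
Proof. exact (pow_lt tm 2 tm_pos). Qed.

Let a0_pos : 0 < / (4 * p * tm ^ 2).
Proof. apply Rinv_0_lt_compat, Rmult_lt_0_compat; [lra | exact tm_sq_pos]. Qed.

Lemma Gam_S t : Gm (S t) = Gm t + gamma_next L mu p alpha tau beta (Gm t).
Proof. reflexivity. Qed.

Lemma Gam_pos t : 0 < Gm t.
Proof.
  induction t as [|t IH]; [exact hG0|].
  rewrite Gam_S. pose proof (gamma_next_ge0 L mu p alpha tau beta hL hmu hp hp1 ha ht hb _ IH).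
  lra.
Qed.

Lemma Gam_le_S t : Gm t <= Gm (S t).
Proof.
  rewrite Gam_S.
  pose proof (gamma_next_ge0 L mu p alpha tau beta hL hmu hp hp1 ha ht hb _ (Gam_pos t)).
  lra.
Qed.

Lemma Gam_exp_rate t :
  G0 * exp (INR t * Rmin (sqrt (p * mu / (4 * L))) (p * tm)) <= Gm t.
Proof.
  apply (exp_growth Gm). intros s. rewrite Gam_S.
  apply exp_growth_step, rate_le_p_theta_next; auto; apply Gam_pos.
Qed.

Lemma Gam_exp_phase t :
  Rmin (G0 * exp (INR t * (p * tm))) (3 / (4 * p * tm ^ 2)) <= Gm t.
Proof.
  apply (capped_exp_growth Gm); [exact Gam_le_S|]. intros s hs. rewrite Gam_S.
  apply exp_growth_step; auto; [apply Gam_pos|].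
  rewrite theta_next_eq_theta_min; auto; [lra | apply Gam_pos].
Qed.

Lemma Gam_quadratic_phase n : / (4 * p * tm ^ 2) <= Gm n ->
  forall k, / (4 * p * tm ^ 2) + p * INR k ^ 2 / 16 <= Gm (n + k).
Proof.
  intros hn k.
  replace (p * INR k ^ 2 / 16) with (p / 16 * INR k ^ 2) by field.
  apply (quadratic_growth Gm); [exact hn|]. intros s u hs hu. rewrite Gam_S.
  replace (p / 16 * (u + 1) ^ 2) with (p * (u + 1) ^ 2 / 16) by field.
  apply quadratic_growth_step; auto; [apply Gam_pos|].
  replace (p * u ^ 2 / 16) with (p / 16 * u ^ 2) by field. exact hu.
Qed.

(* [t_bar] is the first [t] at which [G0 exp (t p tm)] reaches [2 / (4 p tm^2)]. *)
Let exp_lt_t_bar_threshold (s : R) :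
  G0 * exp (s * (p * tm)) < 2 / (4 * p * tm ^ 2) <->
  s < / (p * tm) * ln (/ (2 * G0 * p * tm ^ 2)).
Proof.
  assert (hy : 0 < / (2 * G0 * p * tm ^ 2)).
  { apply Rinv_0_lt_compat, Rmult_lt_0_compat; [|exact tm_sq_pos].
    apply Rmult_lt_0_compat; lra. }
  rewrite <- exp_lt_iff by (try apply Rmult_lt_0_compat; assumption).
  replace (2 / (4 * p * tm ^ 2)) with (G0 * / (2 * G0 * p * tm ^ 2))
    by (field; repeat split; try lra; apply pow_nonzero; lra).
  split; intros h; [apply Rmult_lt_reg_l with G0 | apply Rmult_lt_compat_l]; assumption.
Qed.

Lemma Gam_before_t_bar t : (Z.of_nat t < tb)%Z ->
  G0 / 2 * exp (INR t * p * tm) <= Gm t.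
Proof.
  intros htb. apply lt_of_lt_max_ceil, exp_lt_t_bar_threshold in htb.
  pose proof (Gam_exp_phase t) as h.
  rewrite Rmin_left in h.
  - rewrite Rmult_assoc. pose proof (exp_pos (INR t * (p * tm))). nra.
  - assert (2 / (4 * p * tm ^ 2) < 3 / (4 * p * tm ^ 2)).
    { unfold Rdiv. apply Rmult_lt_compat_r; [exact a0_pos | lra]. }
    lra.
Qed.

Lemma Gam_after_t_bar t : (tb <= Z.of_nat t)%Z ->
  / (4 * p * tm ^ 2) + p * (INR t - IZR tb) ^ 2 / 16 <= Gm t.
Proof.
  intros htb.
  set (n := Z.to_nat tb).
  assert (hn : Z.of_nat n = tb) by (unfold n; rewrite Z2Nat.id; [|unfold t_bar]; lia).
  assert (hnt : (n <= t)%nat) by lia.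
  replace t with (n + (t - n))%nat by lia.
  replace (INR (n + (t - n)) - IZR tb) with (INR (t - n))
    by (rewrite plus_INR, (INR_IZR_INZ n), hn; ring).
  apply Gam_quadratic_phase.
  assert (hX : ~ INR n < / (p * tm) * ln (/ (2 * G0 * p * tm ^ 2))).
  { rewrite INR_IZR_INZ, hn. apply Rle_not_lt, le_max_ceil. }
  rewrite <- exp_lt_t_bar_threshold in hX. apply Rnot_lt_le in hX.
  pose proof (Gam_exp_phase n) as h.
  pose proof a0_pos.
  assert (/ (4 * p * tm ^ 2) <= Rmin (G0 * exp (INR n * (p * tm))) (3 / (4 * p * tm ^ 2))).
  { apply Rmin_glb; unfold Rdiv in *; lra. }
  lra.
Qed.

Lemma theta_s_antitone t :
  theta_s L mu p alpha tau beta G0 (S t) <= theta_s L mu p alpha tau beta G0 t.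
Proof.
  apply Rle_min_compat_r, theta_bar_antitone; auto; [apply Gam_pos | apply Gam_le_S].
Qed.

End Sequence.

Theorem lemma3 (L mu p alpha tau beta G0 : R)
  (hL : 0 < L) (hmu : 0 <= mu) (hLmu : mu <= L)
  (hp0 : 0 < p) (hp1 : p <= 1)
  (ha0 : 0 < alpha) (ha1 : alpha <= 1)
  (ht0 : 0 < tau) (ht1 : tau <= 1)
  (hb0 : 0 < beta) (hb1 : beta <= 1)
  (hG0 : 1 <= G0) :
  let tm := theta_min p alpha tau beta in
  let Gm := Gam L mu p alpha tau beta G0 in
  let th := theta_s L mu p alpha tau beta G0 in
  let ga := gamma_s L mu p alpha tau beta G0 in
  let tb := t_bar p alpha tau beta G0 in
  (* 1. well-definedness and nonnegativity *)
  (forall t : nat,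
      quadr L mu p (Gm t) (theta_bar L mu p (Gm t)) = 0 /\
      (forall x, quadr L mu p (Gm t) x = 0 -> x <= theta_bar L mu p (Gm t)) /\
      1 - p * th t <> 0 /\
      0 <= th t /\ 0 <= ga t) /\
  (* 2. *)
  (forall t : nat, ga t = p * th t * Gm (S t)) /\
  (* 3. *)
  (forall t : nat, L * th t * ga t <= L + Gm t * mu) /\
  (* 4. *)
  (forall t : nat,
      Gm t >= G0 / 2 * exp (INR t * Rmin (sqrt (p * mu / (4 * L))) (p * tm))) /\
  (* 5. *)
  (forall t : nat,
      ((Z.of_nat t < tb)%Z -> Gm t >= G0 / 2 * exp (INR t * p * tm)) /\
      ((tb <= Z.of_nat t)%Z ->
         Gm t >= / (4 * p * tm ^ 2) + p * (INR t - IZR tb) ^ 2 / 16)) /\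
  (* 6. *)
  (forall t : nat, th (S t) <= th t).
Proof.
  intros tm Gm th ga tb; subst tm Gm th ga tb.
  assert (hG0' : 0 < G0) by lra.
  pose proof (Gam_pos L mu p alpha tau beta G0 hL hmu hp0 hp1 ha0 ht0 hb0 hG0') as hGm.
  split; [|split; [|split; [|split; [|split]]]]; intros t.
  - repeat split.
    + apply quadr_theta_bar; auto.
    + apply root_le_theta_bar; auto.
    + enough (p * theta_s L mu p alpha tau beta G0 t <= / 4) by lra.
      apply p_theta_next_le_quarter; auto.
    + left; apply theta_next_pos; auto.
    + apply gamma_next_ge0; auto.
  - apply gamma_next_eq; auto.
  - apply L_theta_gamma_next_le; auto.
  - apply Rle_ge. eapply Rle_trans; [|apply Gam_exp_rate; auto].
    apply Rmult_le_compat_r; [left; apply exp_pos | lra].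
  - split; intros htb; apply Rle_ge; [apply Gam_before_t_bar | apply Gam_after_t_bar]; auto.
  - apply theta_s_antitone; auto.
Qed.
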